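(* Let $\mathbb{X}$ be a Banach space, $\varphi:\mathbb{X}\to\mathbb{R}\cup\{+\infty\}$ a proper lower semicontinuous function, $\mathbf{S}_\varphi:=\{x:\varphi(x)\le0\}$, $\tau>0$ and $x\in\mathbf{S}_\varphi$. Then $$\mathbf{e}\big(\{h\in\mathbb{X}:\varphi'_H(x;h)\le1\},\ \mathbf{T}^{\mathbf B}(\mathbf{S}_\varphi,x)\big)\le\tau$$ holds if and only if $$\mathbf{d}\big(h,\mathbf{T}^{\mathbf B}(\mathbf{S}_\varphi,x)\big)\le\tau\max\{\varphi'_H(x;h),0\}\quad\text{for all }h\in\mathbb{X}.$$
   Context: $\mathbf{d}(x,D):=\inf\{\|x-y\|:y\in D\}$. Excess: $\mathbf{e}(C,D):=\sup_{x\in C}\mathbf{d}(x,D)$, with $\mathbf{e}(\emptyset,D)=0$ if $D\ne\emptyset$ and $=\infty$ otherwise. $\varphi'_H(x;h):=\liminf_{t\to0^+,\,h'\to h}\frac{\varphi(x+th')-\varphi(x)}{t}$. Bouligand tangent cone $\mathbf{T}^{\mathbf B}(C,c)$: the set of all $v$ such that there exist $v_n\to v$, $t_n\downarrow0$ with $c+t_nv_n\in C$ for all $n$. *)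

From HB Require Import structures.
From mathcomp Require Import all_boot all_order all_algebra.
From mathcomp Require Import all_classical all_reals all_analysis.
Set Implicit Arguments. Unset Strict Implicit. Unset Printing Implicit Defensive.
Import Order.TTheory GRing.Theory Num.Theory.
Import numFieldNormedType.Exports.
Local Open Scope classical_set_scope.
Local Open Scope ring_scope.

Section defs.
Context {R : realType} {V : normedModType R}.
Local Open Scope ereal_scope.

(* d(x,D) := inf { ||x - y|| : y in D }  (= +oo when D is empty) *)
Definition dist_set (x : V) (D : set V) : \bar R :=
  ereal_inf [set (`|x - y|%R)%:E | y in D].

Definition excess (C D : set V) : \bar R :=
  if pselect (C = set0) then (if pselect (D = set0) then +oo else 0)
  else ereal_sup [set dist_set x D | x in C].

Definition hadamard_dd (phi : V -> \bar R) (x h : V) : \bar R :=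
  limf_einf (fun p : R * V => (phi (x + p.1 *: p.2)%R - phi x) * (p.1^-1)%:E)
            (filter_prod (0%R^'+) (nbhs h)).

Definition bouligand_cone (C : set V) (c : V) : set V :=
  [set v | exists (vn : nat -> V) (tn : nat -> R),
      [/\ vn @ \oo --> v, tn @ \oo --> 0%R, (forall n, (0 < tn n)%R)
        & forall n, C (c + tn n *: vn n)%R]].

Definition sublevel0 (phi : V -> \bar R) : set V := [set x | phi x <= 0].

Definition proper_fun (phi : V -> \bar R) : Prop :=
  (exists x, phi x < +oo) /\ (forall x, phi x != -oo).
End defs.

(** Both sides are statements about two positively homogeneous functions of
    the direction: the Hadamard derivative [phi'_H(x; .)] and the distance to
    the tangent cone (a cone, so [d(mu h, T) = mu d(h, T)]).  For such [f] and
    [d], bounding [d] by [tau] on [{f <= 1}] is the same as [d <= tau max(f, 0)]: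
    rescale [h] to [h / f h] when [f h > 0], and when [f h <= 0] every multiple
    [lam h] lies in [{f <= 1}], so [d h <= tau / lam] for all [lam > 0]. *)
From HB Require Import structures.
From mathcomp Require Import all_boot all_order all_algebra.
From mathcomp Require Import all_classical all_reals all_analysis.
Import Order.TTheory GRing.Theory Num.Theory.
Import numFieldNormedType.Exports.
Local Open Scope classical_set_scope.
Local Open Scope ring_scope.

Section positively_homogeneous.
Context {R : realType} {X : lmodType R}.
Local Open Scope ereal_scope.

Definition positively_homogeneous (f : X -> \bar R) :=
  forall (mu : R) (h : X), (0 < mu)%R -> f (mu *: h) = mu%:E * f h.

Lemma positively_homogeneous_le (f : X -> \bar R) :
  (forall (mu : R) (h : X), (0 < mu)%R -> f (mu *: h) <= mu%:E * f h) ->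
  positively_homogeneous f.
Proof.
move=> fle mu h mu0; apply/eqP; rewrite eq_le fle//= -lee_pdivlMl//.
have := fle (mu^-1)%R (mu *: h); rewrite scalerA mulVf ?gt_eqF// scale1r.
by apply; rewrite invr_gt0.
Qed.

Lemma positively_homogeneous_sublevel1_bound (f d : X -> \bar R) (tau : R) :
  positively_homogeneous f -> positively_homogeneous d -> (0 < tau)%R ->
  (forall h, f h <= 1 -> d h <= tau%:E) <->
  (forall h, d h <= tau%:E * maxe (f h) 0).
Proof.
move=> fhom dhom tau0; split=> [dle h|dle h fh1]; last first.
  apply: le_trans (dle h) _; rewrite -[leRHS]mule1.
  by apply: lee_wpmul2l; [rewrite lee_fin ltW | rewrite ge_max fh1 lee01].
have d_nonpos : f h <= 0 -> d h <= 0.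
  move=> fh0; apply/lee_addgt0Pr => e e0; rewrite add0e.
  have lam0 : (0 < tau / e)%R by rewrite divr_gt0.
  have : d ((tau / e) *: h) <= tau%:E.
    apply: dle; rewrite fhom//; apply: le_trans lee01.
    by apply: mule_ge0_le0 fh0; rewrite lee_fin ltW.
  rewrite dhom// -lee_pdivlMl// => /le_trans; apply.
  by rewrite -EFinM lee_fin invf_div divfK ?gt_eqF.
have [fh_le0|fh_gt0] := leP (f h) 0; first by rewrite mule0; exact: d_nonpos.
case fhE : (f h) fh_gt0 => [r||//].
  2: by move=> _; rewrite gt0_muley ?lte_fin// leey.
rewrite lte_fin => r0.
have rV0 : (0 < r^-1)%R by rewrite invr_gt0.
have : d (r^-1 *: h) <= tau%:E.
  by apply: dle; rewrite fhom// fhE -EFinM mulVf ?gt_eqF.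
by rewrite dhom// lee_pdivrMl// muleC.
Qed.

End positively_homogeneous.

Section tangent_cone_distance.
Context {R : realType} {X : normedModType R}.
Implicit Types (C D : set X) (c h v : X) (mu : R).

Lemma bouligand_cone0 C c : C c -> bouligand_cone C c 0.
Proof.
move=> Cc; exists (fun=> 0), (fun n => harmonic n); split.
- exact: cvg_cst.
- exact: cvg_harmonic.
- by move=> n; exact: harmonic_gt0.
- by move=> n; rewrite scaler0 addr0.
Qed.

Lemma bouligand_cone_scale C c mu v : 0 < mu ->
  bouligand_cone C c v -> bouligand_cone C c (mu *: v).
Proof.
move=> mu0 [vn [tn [vn_cvg tn_cvg tn_gt0 Cn]]].
exists (fun n => mu *: vn n), (fun n => tn n / mu); split.
- exact: cvgZl_tmp.
- by rewrite -(mul0r mu^-1); apply: cvgMr_tmp.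
- by move=> n; rewrite divr_gt0.
- by move=> n; rewrite scalerA divfK ?gt_eqF.
Qed.

Local Open Scope ereal_scope.

Lemma dist_set_homogeneous D :
  (forall mu y, (0 < mu)%R -> D y -> D (mu *: y)) ->
  positively_homogeneous (dist_set ^~ D).
Proof.
move=> Dscale; apply: positively_homogeneous_le => mu k mu0 /=.
rewrite -lee_pdivrMl//; apply: le_ereal_inf_tmp => _ [y Dy <-].
rewrite lee_pdivrMl//; apply: ge_ereal_inf.
exists (`|mu *: k - mu *: y|%R%:E); first by exists (mu *: y) => //; exact: Dscale.
by rewrite -scalerBr normrZ gtr0_norm.
Qed.

Lemma excess_leP C D (t : \bar R) : D !=set0 -> 0 <= t ->
  excess C D <= t <-> (forall h, C h -> dist_set h D <= t).
Proof.
move=> [y Dy] t_ge0; rewrite /excess; destruct (pselect (C = set0)) as [C0|C_neq0].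
  destruct (pselect (D = set0)) as [D0|D_neq0]; first by rewrite D0 in Dy.
  by split=> // _ h; rewrite C0.
split=> [le_t h Ch|dle]; last by apply: ge_ereal_sup => _ [h Ch <-]; exact: dle.
by apply: le_trans le_t; apply: ereal_sup_ubound; exists h.
Qed.

End tangent_cone_distance.

Section hadamard_derivative.
Context {R : realType} {X : normedModType R}.

Lemma at_right0_scale (mu : R) (A : set R) : 0 < mu ->
  (0:R)^'+ A -> (0:R)^'+ [set s | A (s / mu)].
Proof.
move=> mu0 FA.
have := @cvgMr_tmp R R (nbhs (0:R)) _ id 0 mu^-1 cvg_id.
rewrite mul0r => /(_ (nbhs_filter _) _ FA); rewrite /at_right /within /=.
apply: (@filterS _ (nbhs (0:R)) _ (fun s => 0 < s / mu -> A (s / mu))).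
by move=> s /= As s0; apply: As; rewrite divr_gt0.
Qed.

Lemma nbhs_scale (mu : R) (h : X) (B : set X) :
  nbhs (mu *: h) B -> nbhs h [set k | B (mu *: k)].
Proof. exact: (@cvgZl_tmp R X X (nbhs h) _ mu id h cvg_id). Qed.

Local Open Scope ereal_scope.

Lemma hadamard_dd_homogeneous (phi : X -> \bar R) (x : X) :
  positively_homogeneous (hadamard_dd phi x).
Proof.
(* The change of variables [(t, h') |-> (t / mu, mu h')] maps the difference
   quotient at [mu h] to [mu] times the one at [h]. *)
apply: positively_homogeneous_le => mu h mu0; rewrite /hadamard_dd !limf_einfE.
apply: ge_ereal_sup => _ [W FW <-]; rewrite -lee_pdivrMl//.
set g := fun p : R * X => (phi (x + p.1 *: p.2)%R - phi x) * (p.1^-1)%:E.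
pose W' := [set p : R * X | W (p.1 / mu, mu *: p.2)%R].
apply: (@le_trans _ _ (ereal_inf (g @` W'))); last first.
  apply: ereal_sup_ubound; exists W' => //.
  case: FW => -[A B] /= [FA FB] AB.
  exists ([set s | A (s / mu)%R], [set k | B (mu *: k)]).
    by split; [exact: at_right0_scale | exact: nbhs_scale].
  by move=> [s k] /= [As Bk]; apply: AB.
apply: le_ereal_inf_tmp => _ [p W'p <-].
rewrite lee_pdivrMl//; apply: ge_ereal_inf.
exists (g (p.1 / mu, mu *: p.2)%R); first by exists (p.1 / mu, mu *: p.2)%R.
rewrite /g /= scalerA divfK ?gt_eqF// invfM invrK.
by rewrite EFinM muleA [_ * mu%:E]muleC muleA.
Qed.

End hadamard_derivative.

Local Open Scope ereal_scope.

Theorem proposition4p1 (R : realType) (X : completeNormedModType R)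
  (phi : X -> \bar R) (tau : R) (x : X) :
  proper_fun phi -> lower_semicontinuous phi ->
  (0 < tau)%R -> sublevel0 phi x ->
  excess [set h | hadamard_dd phi x h <= 1] (bouligand_cone (sublevel0 phi) x)
    <= tau%:E
  <-> (forall h : X, dist_set h (bouligand_cone (sublevel0 phi) x)
        <= tau%:E * maxe (hadamard_dd phi x h) 0).
Proof.
move=> _ _ tau0 Sx.
rewrite excess_leP; last 2 first.
- by exists 0%R; exact: bouligand_cone0.
- by rewrite lee_fin ltW.
apply: positively_homogeneous_sublevel1_bound => //.
- exact: hadamard_dd_homogeneous.
- by apply: dist_set_homogeneous => mu y mu0; exact: bouligand_cone_scale.
Qed.
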